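(* Let $\mathbb F$ be a field, $q\in\mathbb F$, $f,g\in\mathbb F[h]$. The associated graded algebra $\mathrm{Gr}(\mathcal H_q(f,g))=\bigoplus_{\alpha,\beta\ge 0}\mathcal F_{(\alpha,\beta)}/\mathcal F^-_{(\alpha,\beta)}$ is generated by the images $\bar x,\bar y,\bar h$ of $x,y,h$ subject to the relations $\bar h\bar x=\bar x f(\bar h)$, $\bar y\bar h=f(\bar h)\bar y$, $\bar y\bar x=q\bar x\bar y$; that is, $\mathrm{Gr}(\mathcal H_q(f,g))\cong\mathcal H_q(f,0)$.
   Context: For a field $\mathbb F$, $q\in\mathbb F$ and $f,g\in\mathbb F[h]$, $\mathcal H_q(f,g)$ is the unital associative $\mathbb F$-algebra generated by $x,y,h$ with relations $hx=xf(h)$, $yh=f(h)y$, $yx-qxy=g(h)$. Every element $a$ can be written uniquely as $a=\sum_{i,j\ge 0}x^ip_{ij}(h)y^j$ with $p_{ij}\in\mathbb F[h]$. For $a\ne0$, $\mathrm{Deg}(a)$ is the lexicographic maximum of $\{(i,j):p_{ij}\ne 0\}$, $\mathrm{Deg}(0)=(-\infty,-\infty)$; $\mathcal F_{(\alpha,\beta)}=\{a:\mathrm{Deg}(a)\le(\alpha,\beta)\}$ and $\mathcal F^-_{(\alpha,\beta)}=\{a:\mathrm{Deg}(a)<(\alpha,\beta)\}$ in lexicographic order; these form an increasing $\mathbb Z_{\ge0}^2$-filtration of $\mathcal H_q(f,g)$. *)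

From HB Require Import structures.
From mathcomp Require Import all_boot all_order all_algebra.
Set Implicit Arguments. Unset Strict Implicit. Unset Printing Implicit Defensive.
Import Order.TTheory GRing.Theory.
Local Open Scope ring_scope.

Definition peval (F : fieldType) (A : algType F) (p : {poly F}) (h : A) : A :=
  \sum_(i < size p) p`_i *: h ^+ i.

Definition Hq_rels (F : fieldType) (A : algType F) (q : F) (f g : {poly F})
  (x y h : A) : Prop :=
  [/\ h * x = x * peval f h,
      y * h = peval f h * y
    & y * x - q *: (x * y) = peval g h].

Definition nf (F : fieldType) (A : algType F) (x y h : A) (N : nat)
  (P : nat -> nat -> {poly F}) : A :=
  \sum_(i < N) \sum_(j < N) x ^+ i * peval (P i j) h * y ^+ j.

Definition PBW (F : fieldType) (A : algType F) (x y h : A) : Prop :=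
  (forall a : A, exists N P, a = nf x y h N P) /\
  (forall N P, nf x y h N P = 0 ->
     forall i j, (i < N)%N -> (j < N)%N -> P i j = 0).

(* (A, x, y, h) is (a copy of) H_q(f,g): the generators satisfy the
   defining relations and the PBW normal form holds. *)
Definition is_Hq (F : fieldType) (A : algType F) (q : F) (f g : {poly F})
  (x y h : A) : Prop :=
  Hq_rels q f g x y h /\ PBW x y h.

Definition lexlt (a b c d : nat) : bool :=
  (a < c)%N || ((a == c) && (b < d)%N).

Definition filt (F : fieldType) (A : algType F) (x y h : A) (al be : nat)
  (a : A) : Prop :=
  exists N P, a = nf x y h N P /\ forall i j, lexlt al be i j -> P i j = 0.

Definition filtm (F : fieldType) (A : algType F) (x y h : A) (al be : nat)
  (a : A) : Prop :=
  exists N P, a = nf x y h N P /\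
    forall i j, ~~ lexlt i j al be -> P i j = 0.

(* Representatives of elements of Gr = (+)_{al,be} F_(al,be)/F^-_(al,be):
   finitely supported families G with G al be \in F_(al,be). *)
Definition grfam (F : fieldType) (A : algType F) (x y h : A)
  (G : nat -> nat -> A) : Prop :=
  (exists N, forall i j, (N <= i)%N \/ (N <= j)%N -> G i j = 0) /\
  (forall i j, filt x y h i j (G i j)).

Definition grequiv (F : fieldType) (A : algType F) (x y h : A)
  (G G' : nat -> nat -> A) : Prop :=
  forall i j, filtm x y h i j (G i j - G' i j).

Definition gradd (F : fieldType) (A : algType F) (G G' : nat -> nat -> A) :
  nat -> nat -> A := fun i j => G i j + G' i j.

Definition grscale (F : fieldType) (A : algType F) (c : F)
  (G : nat -> nat -> A) : nat -> nat -> A := fun i j => c *: G i j.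

Definition grmul (F : fieldType) (A : algType F) (G G' : nat -> nat -> A) :
  nat -> nat -> A :=
  fun a b => \sum_(i < a.+1) \sum_(j < b.+1) G i j * G' (a - i)%N (b - j)%N.

Definition grsingle (F : fieldType) (A : algType F) (i0 j0 : nat) (v : A) :
  nat -> nat -> A := fun i j => if (i == i0) && (j == j0) then v else 0.

(* phi : Gr(A) -> B is an F-algebra isomorphism (Gr presented as the setoid
   of representatives modulo grequiv) sending xbar, ybar, hbar to x', y', h'. *)
Definition gr_iso (F : fieldType) (A : algType F) (x y h : A)
  (B : algType F) (x' y' h' : B) (phi : (nat -> nat -> A) -> B) : Prop :=
  (forall G G', grfam x y h G -> grfam x y h G' -> grfam x y h (grmul G G')) /\
  (forall G G', grfam x y h G -> grfam x y h G' ->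
     (phi G = phi G' <-> grequiv x y h G G')) /\
  (forall b : B, exists2 G, grfam x y h G & phi G = b) /\
  (forall G G', grfam x y h G -> grfam x y h G' ->
     phi (gradd G G') = phi G + phi G') /\
  (forall c G, grfam x y h G -> phi (grscale c G) = c *: phi G) /\
  (forall G G', grfam x y h G -> grfam x y h G' ->
     phi (grmul G G') = phi G * phi G') /\
  phi (grsingle 0 0 1) = 1 /\
  phi (grsingle 1 0 x) = x' /\
  phi (grsingle 0 1 y) = y' /\
  phi (grsingle 0 0 h) = h'.

From HB Require Import structures.
From mathcomp Require Import all_boot all_order all_algebra.
From mathcomp Require Import zify.
From Stdlib Require Import ClassicalEpsilon.
Set Implicit Arguments. Unset Strict Implicit. Unset Printing Implicit Defensive.
Import Order.TTheory GRing.Theory.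
Local Open Scope ring_scope.

(* Because hx = x f(h) and
   yh = f(h) y, a polynomial in h moves past x^k or y^k at the cost of the
   twist sigma^k (composition with f, k times), and y^j x^k equals
   q^(jk) x^k y^j up to terms of lower x-degree (exactly, when g = 0).  Hence
   a product of two monomials is x^(i+k) q^(jk) sigma^k(p) sigma^j(r) y^(j+l)
   up to lower x-degree terms: its "symbol product".

   The PBW property gives every element polynomial coordinates on the
   monomials.  F_(i,j) is described by the vanishing of the coordinates above
   (i,j), and F^-_(i,j) is the kernel of the (i,j)-coordinate on F_(i,j), so a
   class of F_(i,j)/F^-_(i,j) is just its (i,j)-coordinate.  Sending a graded
   family to the element of H_q(f,0) having these coordinates is therefore a
   linear bijection, and it is multiplicative because the graded product in
   Gr(H_q(f,g)) and the product in H_q(f,0) are both computed by convolving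
   symbol products. *)

Section PolynomialEvaluation.
Variables (F : fieldType) (A : algType F).

Lemma peval_horner_alg (p : {poly F}) (a : A) : peval p a = horner_alg a p.
Proof.
rewrite /peval /horner_alg /horner_morph /= horner_coef size_map_poly.
by apply: eq_bigr => i _; rewrite coef_map /= mulr_algl.
Qed.

Lemma pevalD p r (a : A) : peval (p + r) a = peval p a + peval r a.
Proof. by rewrite !peval_horner_alg rmorphD. Qed.

Lemma pevalM p r (a : A) : peval (p * r) a = peval p a * peval r a.
Proof. by rewrite !peval_horner_alg rmorphM. Qed.

Lemma pevalZ c p (a : A) : peval (c *: p) a = c *: peval p a.
Proof. by rewrite !peval_horner_alg -mul_polyC rmorphM /= horner_algC mulr_algl. Qed.

Lemma peval0 (a : A) : peval 0 a = 0.
Proof. by rewrite peval_horner_alg rmorph0. Qed.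

Lemma peval1 (a : A) : peval 1 a = 1.
Proof. by rewrite peval_horner_alg rmorph1. Qed.

Lemma pevalX (a : A) : peval 'X a = a.
Proof. by rewrite peval_horner_alg horner_algX. Qed.

Lemma peval_comp p r (a : A) : peval (p \Po r) a = peval p (peval r a).
Proof.
rewrite comp_polyE {2}/peval !peval_horner_alg raddf_sum /=.
apply: eq_bigr => i _.
by rewrite -mul_polyC rmorphM /= horner_algC mulr_algl rmorphXn.
Qed.

End PolynomialEvaluation.

Section SingleTermSums.
Variable V : zmodType.

Lemma sum_ord_if_eq N k (G : nat -> V) : (k < N)%N ->
  \sum_(k1 < N) (if (k1 : nat) == k then G k1 else 0) = G k.
Proof.
move=> ltkN; rewrite (bigD1 (Ordinal ltkN)) //= eqxx big1 ?addr0 // => k1.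
by rewrite -val_eqE /= => /negbTE ->.
Qed.

Lemma sum_ord2_if_eq N k l (G : nat -> nat -> V) : (k < N)%N -> (l < N)%N ->
  \sum_(k1 < N) \sum_(l1 < N)
     (if ((k1 : nat) == k) && ((l1 : nat) == l) then G k1 l1 else 0) = G k l.
Proof.
move=> ltkN ltlN; rewrite -(sum_ord_if_eq (fun k1 => G k1 l) ltkN).
apply: eq_bigr => k1 _; case: (_ == k) => /=; first exact: sum_ord_if_eq.
exact: big1.
Qed.

Lemma sum_ord_if_add N i a (G : nat -> V) : (a < N)%N ->
  \sum_(k < N) (if (a == i + k)%N then G k else 0) =
  if (i <= a)%N then G (a - i)%N else 0.
Proof.
move=> ltaN; case: leqP => [leia | ltai]; last first.
  by apply: big1 => k _; rewrite ifF //; lia.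
rewrite -(@sum_ord_if_eq N (a - i) G); last lia.
by apply: eq_bigr => k _; have -> : (a == i + k)%N = ((k : nat) == a - i)%N by lia.
Qed.

Lemma sum_ord_if_le N a (G : nat -> V) : (a < N)%N ->
  \sum_(i < N) (if (i <= a)%N then G i else 0) = \sum_(i < a.+1) G i.
Proof. by move=> ltaN; rewrite (big_ord_widen N G ltaN) [RHS]big_mkcond. Qed.

Lemma sum_ord_widen0 N K (G : nat -> V) : (N <= K)%N ->
  (forall k, (N <= k)%N -> (k < K)%N -> G k = 0) ->
  \sum_(k < N) G k = \sum_(k < K) G k.
Proof.
move=> leNK G0; rewrite (big_ord_widen K G leNK) big_mkcond /=.
by apply: eq_bigr => k _; case: ltnP => // leNk; rewrite G0.
Qed.

End SingleTermSums.

Section Monomials.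
Variables (F : fieldType) (A : algType F) (x y h : A).

Definition mono (i : nat) (p : {poly F}) (j : nat) : A :=
  x ^+ i * peval p h * y ^+ j.

Lemma mono0 i j : mono i 0 j = 0.
Proof. by rewrite /mono peval0 mulr0 mul0r. Qed.

Lemma monoD i p r j : mono i (p + r) j = mono i p j + mono i r j.
Proof. by rewrite /mono pevalD mulrDr mulrDl. Qed.

Lemma monoZ i c p j : mono i (c *: p) j = c *: mono i p j.
Proof. by rewrite /mono pevalZ -scalerAr -scalerAl. Qed.

Lemma xX_mono m i p j : x ^+ m * mono i p j = mono (m + i) p j.
Proof. by rewrite /mono exprD !mulrA. Qed.

Lemma mono_yX i p j l : mono i p j * y ^+ l = mono i p (j + l).
Proof. by rewrite /mono exprD !mulrA. Qed.

Lemma mono_one : mono 0 1 0 = 1.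
Proof. by rewrite /mono !expr0 peval1 !mulr1. Qed.

Lemma mono_x : mono 1 1 0 = x.
Proof. by rewrite /mono expr1 expr0 peval1 !mulr1. Qed.

Lemma mono_y : mono 0 1 1 = y.
Proof. by rewrite /mono expr1 expr0 peval1 !mul1r. Qed.

Lemma mono_h : mono 0 'X 0 = h.
Proof. by rewrite /mono !expr0 pevalX mulr1 mul1r. Qed.

Definition xdeg_lt (n : nat) (a : A) : Prop :=
  exists s : seq (nat * {poly F} * nat),
    all (fun t => (t.1.1 < n)%N) s /\ a = \sum_(t <- s) mono t.1.1 t.1.2 t.2.

Lemma xdeg_lt0 n : xdeg_lt n 0.
Proof. by exists [::]; rewrite big_nil. Qed.

Lemma xdeg_ltD n a b : xdeg_lt n a -> xdeg_lt n b -> xdeg_lt n (a + b).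
Proof.
move=> [s [lt_s ->]] [t [lt_t ->]]; exists (s ++ t).
by rewrite all_cat lt_s lt_t big_cat.
Qed.

Lemma xdeg_ltZ n c a : xdeg_lt n a -> xdeg_lt n (c *: a).
Proof.
move=> [s [lt_s ->]]; exists (map (fun t => (t.1.1, c *: t.1.2, t.2)) s).
split; first by rewrite all_map.
by rewrite big_map scaler_sumr; apply: eq_bigr => t _; rewrite monoZ.
Qed.

Lemma xdeg_lt_mono n i p j : (i < n)%N -> xdeg_lt n (mono i p j).
Proof. by move=> ltin; exists [:: (i, p, j)]; rewrite /= ltin big_seq1. Qed.

Lemma xdeg_lt_le n m a : (n <= m)%N -> xdeg_lt n a -> xdeg_lt m a.
Proof.
move=> lenm [s [lt_s ->]]; exists s; split=> //.
by apply: sub_all lt_s => t /= lt_t; apply: leq_trans lenm.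
Qed.

Lemma xdeg_lt_mulr n n' z a :
  (forall i p j, (i < n)%N -> xdeg_lt n' (mono i p j * z)) ->
  xdeg_lt n a -> xdeg_lt n' (a * z).
Proof.
move=> mono_z [s [lt_s ->]]; elim: s lt_s => [|t s IHs] /=.
  by rewrite big_nil mul0r => _; apply: xdeg_lt0.
case/andP=> lt_t lt_s; rewrite big_cons mulrDl.
by apply: xdeg_ltD; [apply: mono_z | apply: IHs].
Qed.

Lemma xdeg_lt_mull n n' z a :
  (forall i p j, (i < n)%N -> xdeg_lt n' (z * mono i p j)) ->
  xdeg_lt n a -> xdeg_lt n' (z * a).
Proof.
move=> z_mono [s [lt_s ->]]; elim: s lt_s => [|t s IHs] /=.
  by rewrite big_nil mulr0 => _; apply: xdeg_lt0.
case/andP=> lt_t lt_s; rewrite big_cons mulrDr.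
by apply: xdeg_ltD; [apply: z_mono | apply: IHs].
Qed.

Lemma xdeg_lt_xX m n a : xdeg_lt n a -> xdeg_lt (m + n) (x ^+ m * a).
Proof.
apply: xdeg_lt_mull => i p j ltin.
by rewrite xX_mono; apply: xdeg_lt_mono; rewrite ltn_add2l.
Qed.

Lemma xdeg_lt_yX l n a : xdeg_lt n a -> xdeg_lt n (a * y ^+ l).
Proof.
by apply: xdeg_lt_mulr => i p j ltin; rewrite mono_yX; apply: xdeg_lt_mono.
Qed.

End Monomials.

Section Commutation.
Variables (F : fieldType) (A : algType F) (f : {poly F}) (x y h : A).
Hypothesis hx : h * x = x * peval f h.
Hypothesis yh : y * h = peval f h * y.

Definition twist (k : nat) (p : {poly F}) : {poly F} := iter k (fun r => r \Po f) p.

Lemma twistS k p : twist k.+1 p = twist k (p \Po f).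
Proof. by rewrite /twist iterSr. Qed.

Lemma hX_x n : h ^+ n * x = x * peval f h ^+ n.
Proof.
elim: n => [|n IHn]; first by rewrite !expr0 mul1r mulr1.
by rewrite exprSr -mulrA hx mulrA IHn -mulrA -exprSr.
Qed.

Lemma y_hX n : y * h ^+ n = peval f h ^+ n * y.
Proof.
elim: n => [|n IHn]; first by rewrite !expr0 mul1r mulr1.
by rewrite exprSr mulrA IHn -mulrA yh mulrA -exprSr.
Qed.

Lemma peval_x p : peval p h * x = x * peval (p \Po f) h.
Proof.
rewrite peval_comp /peval mulr_suml mulr_sumr; apply: eq_bigr => i _.
by rewrite -scalerAl hX_x scalerAr.
Qed.

Lemma y_peval p : y * peval p h = peval (p \Po f) h * y.
Proof.
rewrite peval_comp /peval mulr_suml mulr_sumr; apply: eq_bigr => i _.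
by rewrite -scalerAr y_hX scalerAl.
Qed.

Lemma peval_xX k p : peval p h * x ^+ k = x ^+ k * peval (twist k p) h.
Proof.
elim: k p => [|k IHk] p; first by rewrite !expr0 mul1r mulr1.
by rewrite exprS mulrA peval_x -mulrA IHk mulrA twistS.
Qed.

Lemma yX_peval k p : y ^+ k * peval p h = peval (twist k p) h * y ^+ k.
Proof.
elim: k p => [|k IHk] p; first by rewrite !expr0 mul1r mulr1.
by rewrite exprSr -mulrA y_peval mulrA IHk -mulrA -exprSr twistS.
Qed.

Local Notation mono := (mono x y h).
Local Notation xdeg_lt := (xdeg_lt x y h).

Lemma peval_mono s i p j : peval s h * mono i p j = mono i (twist i s * p) j.
Proof. by rewrite /mono !mulrA peval_xX pevalM !mulrA. Qed.

Lemma mono_peval i p j r : mono i p j * peval r h = mono i (p * twist j r) j.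
Proof. by rewrite /mono -!mulrA yX_peval pevalM !mulrA. Qed.

Lemma xdeg_lt_peval s n a : xdeg_lt n a -> xdeg_lt n (peval s h * a).
Proof.
by apply: xdeg_lt_mull => i p j ltin; rewrite peval_mono; apply: xdeg_lt_mono.
Qed.

Lemma xdeg_lt_pevalr s n a : xdeg_lt n a -> xdeg_lt n (a * peval s h).
Proof.
by apply: xdeg_lt_mulr => i p j ltin; rewrite mono_peval; apply: xdeg_lt_mono.
Qed.

Lemma mono_mul_ordered i p j k r l :
  x ^+ i * peval p h * (x ^+ k * y ^+ j) * (peval r h * y ^+ l) =
  mono (i + k) (twist k p * twist j r) (j + l).
Proof.
rewrite /mono !exprD pevalM !mulrA -(mulrA (x ^+ i) (peval p h) (x ^+ k)).
by rewrite peval_xX !mulrA -(mulrA _ (y ^+ j) (peval r h)) yX_peval !mulrA.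
Qed.

Lemma mono_mul_split i p j k r l :
  mono i p j * mono k r l =
  x ^+ i * peval p h * (y ^+ j * x ^+ k) * (peval r h * y ^+ l).
Proof. by rewrite /mono !mulrA. Qed.

End Commutation.

(* The multiplication rule of the associated graded algebra: the symbol of
   (x^i p(h) y^j)(x^k r(h) y^l) is x^(i+k) q^(jk) sigma^k(p) sigma^j(r) y^(j+l). *)
Definition symbol_mul (F : fieldType) (q : F) (f : {poly F}) (j k : nat)
  (p r : {poly F}) : {poly F} :=
  q ^+ (j * k) *: (twist f k p * twist f j r).

Section Exchange.
Variables (F : fieldType) (A : algType F) (q : F) (f g : {poly F}) (x y h : A).
Hypothesis hx : h * x = x * peval f h.
Hypothesis yh : y * h = peval f h * y.
Hypothesis yx : y * x - q *: (x * y) = peval g h.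

Local Notation mono := (mono x y h).
Local Notation xdeg_lt := (xdeg_lt x y h).

Lemma yx_normal : y * x = q *: (x * y) + peval g h.
Proof. by rewrite -yx addrC subrK. Qed.

Lemma xdeg_lt_y a : xdeg_lt 1 a -> xdeg_lt 1 (y * a).
Proof.
apply: xdeg_lt_mull => i p j; rewrite ltnS leqn0 => /eqP ->.
rewrite /mono expr0 mul1r mulrA (y_peval yh) -mulrA -exprS.
by rewrite -[peval _ h]mul1r -(expr0 x); apply: xdeg_lt_mono.
Qed.

Lemma yX_x_exchange j :
  exists2 E, xdeg_lt 1 E & y ^+ j * x = q ^+ j *: (x * y ^+ j) + E.
Proof.
elim: j => [|j [E lowE eqE]].
  by exists 0; [apply: xdeg_lt0 | rewrite !expr0 mul1r mulr1 scale1r addr0].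
exists (q ^+ j *: mono 0 g j + y * E).
  by apply: xdeg_ltD; [apply: xdeg_ltZ; apply: xdeg_lt_mono | apply: xdeg_lt_y].
rewrite exprS -mulrA eqE mulrDr -scalerAr (mulrA y x) yx_normal mulrDl.
by rewrite scalerDr addrA -scalerAl scalerA -exprSr -mulrA /mono expr0 mul1r.
Qed.

Lemma xdeg_lt_x n a : xdeg_lt n a -> xdeg_lt n.+1 (a * x).
Proof.
apply: xdeg_lt_mulr => i p j ltin; have [E lowE eqE] := yX_x_exchange j.
rewrite /mono -mulrA eqE mulrDr -scalerAr; apply: xdeg_ltD.
  rewrite mulrA -(mulrA (x ^+ i)) (peval_x hx) mulrA -exprSr.
  by apply: xdeg_ltZ; apply: xdeg_lt_mono.
rewrite -mulrA; apply: (@xdeg_lt_le _ _ x y h (i + 1)); first by rewrite addn1 ltnS ltnW.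
by apply: xdeg_lt_xX; apply: (xdeg_lt_peval hx).
Qed.

Lemma yX_xX_exchange j k :
  exists2 E, xdeg_lt k E & y ^+ j * x ^+ k = q ^+ (j * k) *: (x ^+ k * y ^+ j) + E.
Proof.
elim: k => [|k [E lowE eqE]].
  by exists 0; [apply: xdeg_lt0 | rewrite muln0 !expr0 mulr1 mul1r scale1r addr0].
have [E1 lowE1 eqE1] := yX_x_exchange j.
exists (q ^+ (j * k) *: (x ^+ k * E1) + E * x).
  apply: xdeg_ltD; last exact: xdeg_lt_x.
  by apply: xdeg_ltZ; rewrite -addn1; apply: xdeg_lt_xX.
rewrite exprSr mulrA eqE mulrDl -scalerAl -(mulrA (x ^+ k) (y ^+ j)) eqE1.
by rewrite mulrDr -scalerAr scalerDr scalerA -exprD mulnS addnC mulrA addrA.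
Qed.

Lemma mono_mul_lower i p j k r l :
  exists2 E, xdeg_lt (i + k) E &
    mono i p j * mono k r l = mono (i + k) (symbol_mul q f j k p r) (j + l) + E.
Proof.
have [E lowE eqE] := yX_xX_exchange j k.
exists (x ^+ i * (peval p h * E) * peval r h * y ^+ l).
  apply: xdeg_lt_yX; apply: (xdeg_lt_pevalr yh); apply: xdeg_lt_xX.
  exact: (xdeg_lt_peval hx).
rewrite mono_mul_split eqE mulrDr mulrDl -scalerAr -scalerAl.
by rewrite (mono_mul_ordered hx yh) -monoZ !mulrA.
Qed.

End Exchange.

Section ExactExchange.
Variables (F : fieldType) (A : algType F) (q : F) (f : {poly F}) (x y h : A).
Hypothesis hx : h * x = x * peval f h.
Hypothesis yh : y * h = peval f h * y.
Hypothesis yx : y * x = q *: (x * y).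

Lemma yX_x_exact j : y ^+ j * x = q ^+ j *: (x * y ^+ j).
Proof.
elim: j => [|j IHj]; first by rewrite !expr0 mul1r mulr1 scale1r.
by rewrite exprS -mulrA IHj -scalerAr (mulrA y x) yx -scalerAl scalerA -mulrA -exprSr.
Qed.

Lemma yX_xX_exact j k : y ^+ j * x ^+ k = q ^+ (j * k) *: (x ^+ k * y ^+ j).
Proof.
elim: k => [|k IHk]; first by rewrite muln0 !expr0 mulr1 mul1r scale1r.
rewrite exprSr mulrA IHk -scalerAl -(mulrA (x ^+ k) (y ^+ j)) yX_x_exact.
rewrite -scalerAr scalerA.
by rewrite mulrA -exprD mulnS addnC.
Qed.

Lemma mono_mul_exact i p j k r l :
  mono x y h i p j * mono x y h k r l =
  mono x y h (i + k) (symbol_mul q f j k p r) (j + l).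
Proof.
rewrite mono_mul_split yX_xX_exact -scalerAr -scalerAl.
by rewrite (mono_mul_ordered hx yh) -monoZ.
Qed.

End ExactExchange.

Section Coordinates.
Variables (F : fieldType) (A : algType F) (x y h : A).

Local Notation mono := (mono x y h).
Local Notation nf := (nf x y h).

Lemma nfE N P : nf N P = \sum_(i < N) \sum_(j < N) mono i (P i j) j.
Proof. by []. Qed.

Lemma nf_ext N P Q : (forall i j, (i < N)%N -> (j < N)%N -> P i j = Q i j) ->
  nf N P = nf N Q.
Proof.
by move=> eqPQ; apply: eq_bigr => i _; apply: eq_bigr => j _; rewrite eqPQ.
Qed.

Lemma nf_widen N K P : (N <= K)%N ->
  (forall i j, (N <= i)%N || (N <= j)%N -> P i j = 0) -> nf N P = nf K P.
Proof.
move=> leNK P0; rewrite !nfE.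
rewrite (@sum_ord_widen0 _ N K (fun i => \sum_(j < N) mono i (P i j) j) leNK); last first.
  by move=> i leNi _; rewrite big1 // => j _; rewrite P0 ?mono0 ?leNi.
apply: eq_bigr => i _; case: (ltnP i N) => [ltiN | leNi].
  apply: (@sum_ord_widen0 _ N K (fun j => mono i (P i j) j)) => // j leNj _.
  by rewrite P0 ?mono0 // leNj orbT.
by rewrite !big1 // => j _; rewrite P0 ?mono0 ?leNi.
Qed.

Lemma nfD N P Q : nf N (fun i j => P i j + Q i j) = nf N P + nf N Q.
Proof.
rewrite !nfE -big_split; apply: eq_bigr => i _; rewrite -big_split.
by apply: eq_bigr => j _; rewrite monoD.
Qed.

Lemma nfZ c N P : nf N (fun i j => c *: P i j) = c *: nf N P.
Proof.
rewrite !nfE scaler_sumr; apply: eq_bigr => i _; rewrite scaler_sumr.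
by apply: eq_bigr => j _; rewrite monoZ.
Qed.

Lemma nfB N P Q : nf N (fun i j => P i j - Q i j) = nf N P - nf N Q.
Proof.
rewrite -scaleN1r -nfZ -nfD; apply: nf_ext => i j _ _.
by rewrite scaleN1r.
Qed.

Lemma nf_mull N P v : nf N P * v = \sum_(i < N) \sum_(j < N) mono i (P i j) j * v.
Proof. by rewrite nfE mulr_suml; apply: eq_bigr => i _; rewrite mulr_suml. Qed.

Lemma nf_mulr N Q u : u * nf N Q = \sum_(k < N) \sum_(l < N) u * mono k (Q k l) l.
Proof. by rewrite nfE mulr_sumr; apply: eq_bigr => k _; rewrite mulr_sumr. Qed.

Definition trunc N (P : nat -> nat -> {poly F}) (i j : nat) : {poly F} :=
  if (i < N)%N && (j < N)%N then P i j else 0.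

Lemma trunc_out N P i j : (N <= i)%N || (N <= j)%N -> trunc N P i j = 0.
Proof. by rewrite /trunc; case/orP => leN; rewrite !ltnNge leN ?andbF. Qed.

Lemma nf_trunc N K P : (N <= K)%N -> nf N P = nf K (trunc N P).
Proof.
move=> leNK; rewrite -(nf_widen leNK); last exact: trunc_out.
by apply: nf_ext => i j ltiN ltjN; rewrite /trunc ltiN ltjN.
Qed.

Definition nf_data (a : A) : nat * (nat -> nat -> {poly F}) :=
  epsilon (inhabits (0%N, fun _ _ => 0)) (fun NP => a = nf NP.1 NP.2).

Definition coord (a : A) (i j : nat) : {poly F} :=
  trunc (nf_data a).1 (nf_data a).2 i j.

Hypothesis span : forall a : A, exists N P, a = nf N P.
Hypothesis indep : forall N P, nf N P = 0 ->
  forall i j, (i < N)%N -> (j < N)%N -> P i j = 0.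

Lemma nf_inj N P M Q : nf N P = nf M Q -> forall i j, trunc N P i j = trunc M Q i j.
Proof.
move=> eqPQ i j; set K := maxn N M.
have leNK : (N <= K)%N by rewrite leq_maxl.
have leMK : (M <= K)%N by rewrite leq_maxr.
have diff0 : nf K (fun a b => trunc N P a b - trunc M Q a b) = 0.
  by rewrite nfB -!nf_trunc // eqPQ subrr.
have [outK | ] := boolP ((K <= i) || (K <= j))%N.
  have out X : (X <= K)%N -> (X <= i)%N || (X <= j)%N.
    by move=> leXK; case/orP: outK => leK; rewrite (leq_trans leXK leK) ?orbT.
  by rewrite (trunc_out P (out _ leNK)) (trunc_out Q (out _ leMK)).
rewrite negb_or -!ltnNge => /andP [ltiK ltjK].
by apply/eqP; rewrite -subr_eq0; apply/eqP; apply: indep diff0 i j ltiK ltjK.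
Qed.

Lemma coord_spec a : exists N P, a = nf N P /\ forall i j, coord a i j = trunc N P i j.
Proof.
have nfa : a = nf (nf_data a).1 (nf_data a).2.
  by apply: (epsilon_spec _ (fun NP => a = nf NP.1 NP.2)); have [N [P ->]] := span a;
     exists (N, P).
by exists (nf_data a).1, (nf_data a).2.
Qed.

Lemma coord_nf N P i j : coord (nf N P) i j = trunc N P i j.
Proof. by have [M [Q [eqQ ->]]] := coord_spec (nf N P); apply: nf_inj. Qed.

Definition supported (a : A) (N : nat) : Prop :=
  forall i j, (N <= i)%N || (N <= j)%N -> coord a i j = 0.

Lemma supported_exists a : exists N, supported a N.
Proof.
by have [N [P [_ eqc]]] := coord_spec a; exists N => i j outN; rewrite eqc trunc_out.
Qed.

Lemma supported_le a N M : supported a N -> (N <= M)%N -> supported a M.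
Proof.
move=> suppN leNM i j /orP outM; apply: suppN.
by case: outM => leM; rewrite (leq_trans leNM leM) ?orbT.
Qed.

Lemma supported_above a M : exists2 N, (M < N)%N & supported a N.
Proof.
have [N suppN] := supported_exists a.
exists (maxn N M).+1; first by rewrite ltnS leq_maxr.
by apply: supported_le suppN _; rewrite leqW ?leq_maxl.
Qed.

Lemma nf_coord a N : supported a N -> a = nf N (coord a).
Proof.
move=> suppN; have [M [P [nfa eqc]]] := coord_spec a.
rewrite {1}nfa (nf_trunc P (leq_maxr N M)) (nf_widen (leq_maxl N M) suppN).
by apply: nf_ext => i j _ _; rewrite eqc.
Qed.

Lemma coord_inj a b : (forall i j, coord a i j = coord b i j) -> a = b.
Proof.
move=> eqab; have [N suppa] := supported_exists a; have [M suppb] := supported_exists b.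
rewrite (nf_coord (supported_le suppa (leq_maxl N M))).
rewrite (nf_coord (supported_le suppb (leq_maxr N M))).
by apply: nf_ext => i j _ _; rewrite eqab.
Qed.

Lemma coordD a b i j : coord (a + b) i j = coord a i j + coord b i j.
Proof.
have [N suppa] := supported_exists a; have [M suppb] := supported_exists b.
have suppa' := supported_le suppa (leq_maxl N M).
have suppb' := supported_le suppb (leq_maxr N M).
rewrite {1}(nf_coord suppa') {1}(nf_coord suppb') -nfD coord_nf /trunc.
case: ifP => // /negbT; rewrite negb_and -!leqNgt => outK.
by rewrite suppa' ?suppb' ?addr0.
Qed.

Lemma coordZ c a i j : coord (c *: a) i j = c *: coord a i j.
Proof.
have [N suppa] := supported_exists a.
rewrite {1}(nf_coord suppa) -nfZ coord_nf /trunc.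
case: ifP => // /negbT; rewrite negb_and -!leqNgt => outN.
by rewrite suppa ?scaler0.
Qed.

Lemma coord0 i j : coord 0 i j = 0.
Proof. by rewrite -(scale0r 0) coordZ scale0r. Qed.

Lemma coordB a b i j : coord (a - b) i j = coord a i j - coord b i j.
Proof. by rewrite coordD -scaleN1r coordZ scaleN1r. Qed.

Lemma coord_sum (I : Type) (r : seq I) (P : pred I) (G : I -> A) i j :
  coord (\sum_(k <- r | P k) G k) i j = \sum_(k <- r | P k) coord (G k) i j.
Proof.
elim: r => [|t r IHr]; first by rewrite !big_nil coord0.
by rewrite !big_cons; case: (P t); rewrite ?coordD IHr.
Qed.

Lemma coord_mono i p j k l :
  coord (mono i p j) k l = if (k == i) && (l == j) then p else 0.
Proof.
set K := (maxn i j).+1.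
have ltiK : (i < K)%N by rewrite ltnS leq_maxl.
have ltjK : (j < K)%N by rewrite ltnS leq_maxr.
have -> : mono i p j = nf K (fun a b => if (a == i) && (b == j) then p else 0).
  rewrite nfE -(sum_ord2_if_eq (fun a b => mono a p b) ltiK ltjK).
  by apply: eq_bigr => a _; apply: eq_bigr => b _; case: ifP; rewrite ?mono0.
rewrite coord_nf /trunc; case: ifP => // /negbT.
rewrite negb_and -!leqNgt => outK.
by case: ifP => // /andP [/eqP eqki /eqP eqlj]; move: outK; rewrite eqki eqlj; lia.
Qed.

Lemma coord_xdeg_lt n a k l : xdeg_lt x y h n a -> (n <= k)%N -> coord a k l = 0.
Proof.
move=> [s [lt_s ->]] lenk; rewrite coord_sum big1_seq // => t /andP [_ t_s].
rewrite coord_mono; case: eqP => //= eqk.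
by move/allP: lt_s => /(_ t t_s); rewrite -eqk ltnNge lenk.
Qed.

Lemma filt_coordP i j a :
  filt x y h i j a <-> forall k l, lexlt i j k l -> coord a k l = 0.
Proof.
split=> [[N [P [-> P0]]] k l ltkl | coord0_above].
  by rewrite coord_nf /trunc P0 //; case: ifP.
have [N suppN] := supported_exists a.
by exists N, (coord a); split=> //; apply: nf_coord.
Qed.

Lemma filtm_coordP i j a :
  filtm x y h i j a <-> forall k l, ~~ lexlt k l i j -> coord a k l = 0.
Proof.
split=> [[N [P [-> P0]]] k l lekl | coord0_above].
  by rewrite coord_nf /trunc P0 //; case: ifP.
have [N suppN] := supported_exists a.
by exists N, (coord a); split=> //; apply: nf_coord.
Qed.

End Coordinates.

Section FilteredProduct.
Variables (F : fieldType) (A : algType F) (q : F) (f g : {poly F}) (x y h : A).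
Hypothesis hx : h * x = x * peval f h.
Hypothesis yh : y * h = peval f h * y.
Hypothesis yx : y * x - q *: (x * y) = peval g h.
Hypothesis span : forall a : A, exists N P, a = nf x y h N P.
Hypothesis indep : forall N P, nf x y h N P = 0 ->
  forall i j, (i < N)%N -> (j < N)%N -> P i j = 0.

Local Notation mono := (mono x y h).
Local Notation coord := (coord x y h).

Lemma coord_mono_mul_top i p j k r l a b : (i + k <= a)%N ->
  coord (mono i p j * mono k r l) a b =
  if (a == i + k)%N && (b == j + l)%N then symbol_mul q f j k p r else 0.
Proof.
move=> leika; have [E lowE ->] := mono_mul_lower hx yh yx i p j k r l.
rewrite (coordD span indep) (coord_xdeg_lt span indep b lowE leika) addr0.
exact: (coord_mono span indep).
Qed.

Lemma coord_mono_mul_filt i p j v k l a b :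
  filt x y h k l v -> ~~ lexlt a b (i + k) (j + l) ->
  coord (mono i p j * v) a b =
  if (a == i + k)%N && (b == j + l)%N then symbol_mul q f j k p (coord v k l) else 0.
Proof.
move=> /(filt_coordP span indep) v0 le_ab.
have [N lt_N suppv] := supported_above span v (maxn k l).
have ltkN := leq_ltn_trans (leq_maxl k l) lt_N.
have ltlN := leq_ltn_trans (leq_maxr k l) lt_N.
rewrite {1}(nf_coord span suppv) nf_mulr (coord_sum span indep).
rewrite -(sum_ord2_if_eq (fun _ _ => if (a == i + k)%N && (b == j + l)%N
  then symbol_mul q f j k p (coord v k l) else 0) ltkN ltlN).
apply: eq_bigr => k1 _; rewrite (coord_sum span indep); apply: eq_bigr => l1 _.
have [above | below] := boolP (lexlt k l k1 l1).
  rewrite v0 // mono0 mulr0 (coord0 span indep) ifF //; move: above; rewrite /lexlt; lia.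
rewrite coord_mono_mul_top; last by move: le_ab below; rewrite /lexlt; lia.
have [/andP [/eqP -> /eqP ->] // | not_kl] :=
  boolP (((k1 : nat) == k) && ((l1 : nat) == l)).
by rewrite ifF //; move: le_ab below not_kl; rewrite /lexlt; lia.
Qed.

Lemma coord_mul_filt u v i j k l a b :
  filt x y h i j u -> filt x y h k l v -> ~~ lexlt a b (i + k) (j + l) ->
  coord (u * v) a b =
  if (a == i + k)%N && (b == j + l)%N
  then symbol_mul q f j k (coord u i j) (coord v k l) else 0.
Proof.
move=> /(filt_coordP span indep) u0 filt_v le_ab.
have [N lt_N suppu] := supported_above span u (maxn i j).
have ltiN := leq_ltn_trans (leq_maxl i j) lt_N.
have ltjN := leq_ltn_trans (leq_maxr i j) lt_N.
rewrite {1}(nf_coord span suppu) nf_mull (coord_sum span indep).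
rewrite -(sum_ord2_if_eq (fun _ _ => if (a == i + k)%N && (b == j + l)%N
  then symbol_mul q f j k (coord u i j) (coord v k l) else 0) ltiN ltjN).
apply: eq_bigr => i1 _; rewrite (coord_sum span indep); apply: eq_bigr => j1 _.
have [above | below] := boolP (lexlt i j i1 j1).
  rewrite u0 // mono0 mul0r (coord0 span indep) ifF //; move: above; rewrite /lexlt; lia.
rewrite (coord_mono_mul_filt _ filt_v); last by move: le_ab below; rewrite /lexlt; lia.
have [/andP [/eqP -> /eqP ->] // | not_ij] :=
  boolP (((i1 : nat) == i) && ((j1 : nat) == j)).
by rewrite ifF //; move: le_ab below not_ij; rewrite /lexlt; lia.
Qed.

End FilteredProduct.

Section GradedProduct.
Variables (F : fieldType) (A : algType F) (q : F) (f : {poly F}) (x y h : A).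
Hypothesis hx : h * x = x * peval f h.
Hypothesis yh : y * h = peval f h * y.
Hypothesis yx : y * x = q *: (x * y).
Hypothesis span : forall a : A, exists N P, a = nf x y h N P.
Hypothesis indep : forall N P, nf x y h N P = 0 ->
  forall i j, (i < N)%N -> (j < N)%N -> P i j = 0.

Local Notation mono := (mono x y h).
Local Notation coord := (coord x y h).

Lemma coord_mono_mul i p j v a b :
  coord (mono i p j * v) a b =
  if (i <= a)%N && (j <= b)%N then symbol_mul q f j (a - i) p (coord v (a - i) (b - j))
  else 0.
Proof.
have [N lt_N suppv] := supported_above span v (maxn a b).
have ltaN := leq_ltn_trans (leq_maxl a b) lt_N.
have ltbN := leq_ltn_trans (leq_maxr a b) lt_N.
rewrite {1}(nf_coord span suppv) nf_mulr (coord_sum span indep).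
under eq_bigr => k _.
  rewrite (coord_sum span indep).
  under eq_bigr => l _ do rewrite (mono_mul_exact hx yh yx) (coord_mono span indep).
  over.
have row k : \sum_(l < N) (if (a == i + k)%N && (b == j + l)%N
    then symbol_mul q f j k p (coord v k l) else 0) =
  if (a == i + k)%N then
    (if (j <= b)%N then symbol_mul q f j k p (coord v k (b - j)) else 0) else 0.
  case: (a == i + k)%N => /=; last exact: big1.
  exact: (sum_ord_if_add j (fun l => symbol_mul q f j k p (coord v k l)) ltbN).
under eq_bigr => k _ do rewrite row.
rewrite (sum_ord_if_add i (fun k =>
  if (j <= b)%N then symbol_mul q f j k p (coord v k (b - j)) else 0) ltaN).
by case: (i <= a)%N.
Qed.

Lemma coord_mul u v a b :
  coord (u * v) a b =
  \sum_(i < a.+1) \sum_(j < b.+1)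
     symbol_mul q f j (a - i) (coord u i j) (coord v (a - i) (b - j)).
Proof.
have [N lt_N suppu] := supported_above span u (maxn a b).
have ltaN := leq_ltn_trans (leq_maxl a b) lt_N.
have ltbN := leq_ltn_trans (leq_maxr a b) lt_N.
rewrite {1}(nf_coord span suppu) nf_mull (coord_sum span indep).
set S := fun i j => symbol_mul q f j (a - i) (coord u i j) (coord v (a - i) (b - j)).
rewrite -(sum_ord_if_le (fun i => \sum_(j < b.+1) S i j) ltaN).
apply: eq_bigr => i _; rewrite (coord_sum span indep).
under eq_bigr => j _ do rewrite coord_mono_mul.
case: (i <= a)%N => /=; last exact: big1.
exact: (sum_ord_if_le (S i) ltbN).
Qed.

End GradedProduct.

(* The isomorphism Gr(H_q(f,g)) -> H_q(f,0): a family G with G_(i,j) in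
   F_(i,j) is sent to sum_(i,j) x'^i c_ij(h') y'^j, where c_ij is the
   (i,j)-coordinate of G_(i,j), i.e. its class in F_(i,j)/F^-_(i,j). *)
Section GradedIsomorphism.
Variables (F : fieldType) (q : F) (f g : {poly F}).
Variables (A : algType F) (x y h : A) (B : algType F) (x' y' h' : B).

Local Notation coord' := (coord x' y' h').
Local Notation coord := (coord x y h).

Definition bounded (G : nat -> nat -> A) (N : nat) : Prop :=
  forall i j, (N <= i)%N \/ (N <= j)%N -> G i j = 0.

Definition bound_of (G : nat -> nat -> A) : nat := epsilon (inhabits 0%N) (bounded G).

Definition symbol (G : nat -> nat -> A) (i j : nat) : {poly F} := coord (G i j) i j.

Definition gr_to_Hq0 (G : nat -> nat -> A) : B := nf x' y' h' (bound_of G) (symbol G).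

Hypothesis hx : h * x = x * peval f h.
Hypothesis yh : y * h = peval f h * y.
Hypothesis yx : y * x - q *: (x * y) = peval g h.
Hypothesis span : forall a : A, exists N P, a = nf x y h N P.
Hypothesis indep : forall N P, nf x y h N P = 0 ->
  forall i j, (i < N)%N -> (j < N)%N -> P i j = 0.
Hypothesis hx' : h' * x' = x' * peval f h'.
Hypothesis yh' : y' * h' = peval f h' * y'.
Hypothesis yx' : y' * x' = q *: (x' * y').
Hypothesis span' : forall b : B, exists N P, b = nf x' y' h' N P.
Hypothesis indep' : forall N P, nf x' y' h' N P = 0 ->
  forall i j, (i < N)%N -> (j < N)%N -> P i j = 0.

Local Notation phi := gr_to_Hq0.

Lemma bounded_le G N M : bounded G N -> (N <= M)%N -> bounded G M.
Proof.
by move=> GN leNM i j [leMi | leMj]; apply: GN; [left | right]; apply: leq_trans leNM _.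
Qed.

Lemma bounded_max G G' N N' : bounded G N -> bounded G' N' ->
  bounded G (maxn N N') /\ bounded G' (maxn N N').
Proof.
by move=> GN G'N'; split; [apply: bounded_le GN _; exact: leq_maxl |
                           apply: bounded_le G'N' _; exact: leq_maxr].
Qed.

Lemma phi_nf G N : bounded G N -> phi G = nf x' y' h' N (symbol G).
Proof.
move=> GN; have Gb : bounded G (bound_of G) by apply: epsilon_spec; exists N.
have symbol0 M : bounded G M -> forall i j, (M <= i)%N || (M <= j)%N -> symbol G i j = 0.
  by move=> GM i j /orP outM; rewrite /symbol GM ?(coord0 span indep).
rewrite /phi (nf_widen x' y' h' (leq_maxl _ N) (symbol0 _ Gb)).
by rewrite (nf_widen x' y' h' (leq_maxr (bound_of G) N) (symbol0 _ GN)).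
Qed.

Lemma coord_phi G N : bounded G N -> forall a b, coord' (phi G) a b = symbol G a b.
Proof.
move=> GN a b; rewrite (phi_nf GN) (coord_nf span' indep') /trunc.
case: ifP => // /negbT; rewrite negb_and -!leqNgt => /orP outN.
by rewrite /symbol GN ?(coord0 span indep).
Qed.

Lemma phi_eq_symbol G G' : grfam x y h G -> grfam x y h G' ->
  phi G = phi G' <-> forall a b, symbol G a b = symbol G' a b.
Proof.
move=> [[N GN] _] [[N' G'N'] _]; have [GM G'M] := bounded_max GN G'N'.
split=> [eqphi a b | eqsym].
  by rewrite -(coord_phi GM) -(coord_phi G'M) eqphi.
by apply: (coord_inj span') => a b; rewrite (coord_phi GM) (coord_phi G'M) eqsym.
Qed.

Lemma filtm_filt i j a : filt x y h i j a -> filtm x y h i j a <-> coord a i j = 0.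
Proof.
move=> /(filt_coordP span indep) above0; rewrite (filtm_coordP span indep).
split=> [|aij0 k l]; first by apply; rewrite /lexlt ltnn eqxx ltnn.
have [/andP [/eqP -> /eqP ->] // | not_ij] := boolP ((k == i) && (l == j)).
by move=> le_kl; apply: above0; move: le_kl not_ij; rewrite /lexlt; lia.
Qed.

Lemma filtB i j a b :
  filt x y h i j a -> filt x y h i j b -> filt x y h i j (a - b).
Proof.
move=> /(filt_coordP span indep) a0 /(filt_coordP span indep) b0.
by apply/(filt_coordP span indep) => k l ltkl; rewrite (coordB span indep) a0 ?b0 ?subrr.
Qed.

Lemma phi_eq G G' : grfam x y h G -> grfam x y h G' ->
  phi G = phi G' <-> grequiv x y h G G'.
Proof.
move=> GG G'G; rewrite (phi_eq_symbol GG G'G); have [_ Gf] := GG; have [_ G'f] := G'G.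
split=> eqsym i j.
  apply/(filtm_filt (filtB (Gf i j) (G'f i j))).
  by rewrite (coordB span indep); apply/eqP; rewrite subr_eq0; apply/eqP; apply: eqsym.
apply/eqP; rewrite -subr_eq0 -(coordB span indep); apply/eqP.
exact/(filtm_filt (filtB (Gf i j) (G'f i j))).
Qed.

(* b is the image of the family of its monomials x^i (coord b i j)(h) y^j *)
Lemma phi_surj (b : B) : exists2 G, grfam x y h G & phi G = b.
Proof.
have [N suppb] := supported_exists span' b.
pose G i j := mono x y h i (coord' b i j) j.
have GN : bounded G N.
  by move=> i j outN; rewrite /G suppb ?mono0 //; case: outN => ->; rewrite ?orbT.
exists G.
  split; first by exists N.
  move=> i j; apply/(filt_coordP span indep) => k l ltkl.
  by rewrite (coord_mono span indep) ifF //; move: ltkl; rewrite /lexlt; lia.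
apply: (coord_inj span') => a c.
by rewrite (coord_phi GN) /symbol /G (coord_mono span indep) !eqxx.
Qed.

Lemma phi_add G G' : grfam x y h G -> grfam x y h G' ->
  phi (gradd G G') = phi G + phi G'.
Proof.
move=> [[N GN] _] [[N' G'N'] _]; have [GM G'M] := bounded_max GN G'N'.
have sumM : bounded (gradd G G') (maxn N N').
  by move=> i j outM; rewrite /gradd GM // G'M // addr0.
rewrite (phi_nf sumM) (phi_nf GM) (phi_nf G'M) -nfD.
by apply: nf_ext => i j _ _; rewrite /symbol /gradd (coordD span indep).
Qed.

Lemma phi_scale c G : grfam x y h G -> phi (grscale c G) = c *: phi G.
Proof.
move=> [[N GN] _].
have scaleN : bounded (grscale c G) N by move=> i j outN; rewrite /grscale GN // scaler0.
rewrite (phi_nf scaleN) (phi_nf GN) -nfZ.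
by apply: nf_ext => i j _ _; rewrite /symbol /grscale (coordZ span indep).
Qed.

Lemma grmul_bounded G G' N N' :
  bounded G N -> bounded G' N' -> bounded (grmul G G') (N + N').
Proof.
move=> GN G'N' a b outNN'; apply: big1 => i _; apply: big1 => j _.
have := ltn_ord i; have := ltn_ord j => ltj lti.
case: (ltnP i N) => ltiN; last by rewrite GN ?mul0r //; left.
case: (ltnP j N) => ltjN; last by rewrite GN ?mul0r //; right.
by rewrite G'N' ?mulr0 //; lia.
Qed.

Lemma symbol_grmul G G' a b :
  (forall i j, filt x y h i j (G i j)) -> (forall i j, filt x y h i j (G' i j)) ->
  symbol (grmul G G') a b =
  \sum_(i < a.+1) \sum_(j < b.+1)
     symbol_mul q f j (a - i) (symbol G i j) (symbol G' (a - i) (b - j)).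
Proof.
move=> Gf G'f; rewrite /symbol /grmul (coord_sum span indep).
apply: eq_bigr => i _; rewrite (coord_sum span indep); apply: eq_bigr => j _.
have lti := ltn_ord i; have ltj := ltn_ord j.
rewrite (coord_mul_filt hx yh yx span indep (Gf i j) (G'f _ _)); last first.
  by rewrite /lexlt; lia.
by rewrite ifT //; apply/andP; split; apply/eqP; lia.
Qed.

Lemma filt_grmul G G' :
  (forall i j, filt x y h i j (G i j)) -> (forall i j, filt x y h i j (G' i j)) ->
  forall a b, filt x y h a b (grmul G G' a b).
Proof.
move=> Gf G'f a b; apply/(filt_coordP span indep) => k l ltkl.
rewrite /grmul (coord_sum span indep); apply: big1 => i _.
rewrite (coord_sum span indep); apply: big1 => j _.
have lti := ltn_ord i; have ltj := ltn_ord j.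
rewrite (coord_mul_filt hx yh yx span indep (Gf i j) (G'f _ _)); last first.
  by move: ltkl; rewrite /lexlt; lia.
by rewrite ifF //; move: ltkl; rewrite /lexlt; lia.
Qed.

Lemma phi_mul G G' : grfam x y h G -> grfam x y h G' ->
  phi (grmul G G') = phi G * phi G'.
Proof.
move=> [[N GN] Gf] [[N' G'N'] G'f].
apply: (coord_inj span') => a b.
rewrite (coord_phi (grmul_bounded GN G'N')) (symbol_grmul _ _ Gf G'f).
rewrite (coord_mul hx' yh' yx' span' indep').
apply: eq_bigr => i _; apply: eq_bigr => j _.
by rewrite !(coord_phi GN) !(coord_phi G'N').
Qed.

Lemma phi_single i0 j0 p :
  phi (grsingle i0 j0 (mono x y h i0 p j0)) = mono x' y' h' i0 p j0.
Proof.
have singleN : bounded (grsingle i0 j0 (mono x y h i0 p j0)) (maxn i0 j0).+1.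
  move=> i j outN; rewrite /grsingle; case: ifP => // /andP [/eqP eqi /eqP eqj].
  by move: outN; rewrite eqi eqj; lia.
apply: (coord_inj span') => a b.
rewrite (coord_phi singleN) /symbol /grsingle (coord_mono span' indep').
case: ifP => [/andP [/eqP -> /eqP ->] | _]; last exact: (coord0 span indep).
by rewrite (coord_mono span indep) !eqxx.
Qed.

Theorem gr_to_Hq0_iso : gr_iso x y h x' y' h' phi.
Proof.
split.
  move=> G G' [[N GN] Gf] [[N' G'N'] G'f]; split; last exact: filt_grmul.
  by exists (N + N')%N; apply: grmul_bounded.
split; first exact: phi_eq.
split; first exact: phi_surj.
split; first exact: phi_add.
split; first by move=> c G; apply: phi_scale.
split; first exact: phi_mul.
split; first by rewrite -(mono_one x y h) phi_single mono_one.
split; first by rewrite -(mono_x x y h) phi_single mono_x.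
split; first by rewrite -(mono_y x y h) phi_single mono_y.
by rewrite -(mono_h x y h) phi_single mono_h.
Qed.

End GradedIsomorphism.

Theorem mainTheorem3 (F : fieldType) (q : F) (f g : {poly F})
  (A : algType F) (x y h : A) (B : algType F) (x' y' h' : B) :
  is_Hq q f g x y h -> is_Hq q f 0 x' y' h' ->
  exists phi : (nat -> nat -> A) -> B, gr_iso x y h x' y' h' phi.
Proof.
move=> [[hx yh yx] [span indep]] [[hx' yh' yx'] [span' indep']].
have yx0 : y' * x' = q *: (x' * y') by apply/eqP; rewrite -subr_eq0 yx' peval0.
exists (gr_to_Hq0 x y h x' y' h').
exact: (gr_to_Hq0_iso hx yh yx span indep hx' yh' yx0 span' indep').
Qed.
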